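(* Let $\mathbf{k}=\bigoplus_{i=1}^N\mathbb{F}_2$, let $A$ and $B$ be differential graded algebras over $\mathbf{k}$, and let $f,g\colon A\to B$ be $\mathcal{A}_\infty$-homomorphisms. Suppose the rank-one type DA bimodules ${}^{B}[f]_A$ and ${}^{B}[g]_A$ are homotopy equivalent. Then $f$ and $g$ induce conjugate maps on homology: there is an invertible element $u\in H_*(B)$ such that for every cycle $a\in A$, $[f_1(a)]=u\,[g_1(a)]\,u^{-1}$ in $H_*(B)$.
   Context: Work over $\mathbb{F}_2$ (no signs); tensor products are over $\mathbf{k}$. An $\mathcal{A}_\infty$-homomorphism $f\colon A\to B$ of differential algebras is a family of $\mathbf{k}$-bimodule maps $f_n\colon A^{\otimes n}\to B$, $n\ge1$, with $d_Bf_n(a_1,\dots,a_n)+\sum_i f_n(a_1,\dots,da_i,\dots,a_n)+\sum_{i=1}^{n-1}f_{n-1}(a_1,\dots,a_ia_{i+1},\dots,a_n)+\sum_{j=1}^{n-1}f_j(a_1,\dots,a_j)f_{n-j}(a_{j+1},\dots,a_n)=0$. A type DA structure ${}^BX_A$ is a $\mathbf{k}$-bimodule $X$ with maps $\delta_{1+n}\colon X\otimes A^{\otimes n}\to B\otimes X$ ($n\ge0$) satisfying $\sum_{j=0}^n(\mu_B\otimes\mathrm{Id})(\mathrm{Id}_B\otimes\delta_{1+n-j})(\delta_{1+j}(x,a_1,\dots,a_j)\otimes a_{j+1}\otimes\cdots\otimes a_n)+(d_B\otimes\mathrm{Id})\delta_{1+n}(x,a_1,\dots,a_n)+\sum_i\delta_{1+n}(x,\dots,da_i,\dots)+\sum_{i=1}^{n-1}\delta_n(x,\dots,a_ia_{i+1},\dots)=0$.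 The bimodule ${}^B[f]_A$ has underlying $\mathbf{k}$-bimodule $\mathbf{k}$, $\delta_1=0$, and (identifying $\mathbf{k}\otimes A^{\otimes n}$ with $A^{\otimes n}$ and $B\otimes\mathbf{k}$ with $B$) $\delta_{1+n}=f_n$ for $n\ge1$. A morphism $\phi\colon X\to Y$ of type DA structures is a family $\phi_{1+n}\colon X\otimes A^{\otimes n}\to B\otimes Y$; its differential is $(\partial\phi)_{1+n}(x,a_1,\dots,a_n)=\sum_{j=0}^n(\mu_B\otimes\mathrm{Id})(\mathrm{Id}\otimes\delta^Y_{1+n-j})(\phi_{1+j}(x,a_1,\dots,a_j)\otimes a_{j+1}\otimes\cdots\otimes a_n)+\sum_{j=0}^n(\mu_B\otimes\mathrm{Id})(\mathrm{Id}\otimes\phi_{1+n-j})(\delta^X_{1+j}(x,a_1,\dots,a_j)\otimes a_{j+1}\otimes\cdots\otimes a_n)+(d_B\otimes\mathrm{Id})\phi_{1+n}(x,a_1,\dots,a_n)+\sum_i\phi_{1+n}(x,\dots,da_i,\dots)+\sum_{i=1}^{n-1}\phi_n(x,\dots,a_ia_{i+1},\dots)$. Composition is $(\psi\circ\phi)_{1+n}(x,a_1,\dots,a_n)=\sum_j(\mu_B\otimes\mathrm{Id})(\mathrm{Id}\otimes\psi_{1+n-j})(\phi_{1+j}(x,a_1,\dots,a_j)\otimes a_{j+1}\otimes\cdots\otimes a_n)$, and the identity has $\mathrm{Id}_1(x)=1\otimes x$, $\mathrm{Id}_{1+n}=0$ for $n\ge1$. Two type DA structures are homotopy equivalent if there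 are morphisms $\phi\colon X\to Y$, $\psi\colon Y\to X$ with $\partial\phi=\partial\psi=0$ and morphisms $F,G$ with $\partial F=\psi\circ\phi+\mathrm{Id}_X$ and $\partial G=\phi\circ\psi+\mathrm{Id}_Y$. *)

From mathcomp Require Import all_boot all_algebra.
Set Implicit Arguments. Unset Strict Implicit. Unset Printing Implicit Defensive.
Import GRing.Theory.
Local Open Scope ring_scope.

(* The ground ring k = (F_2)^N is encoded through its N orthogonal idempotents
   e_1, ..., e_N (which span k over F_2).  A differential (graded) algebra over
   k is a ring R of characteristic 2 (= an F_2-algebra) with a ring map k -> R,
   i.e. orthogonal idempotents e i summing to 1, and a differential d which is
   a k-bimodule map, squares to zero and satisfies the Leibniz rule. *)
Definition is_dga (N : nat) (R : pzRingType) (e : 'I_N -> R) (d : R -> R) : Prop :=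
  [/\ 1 + 1 = 0 :> R,
      (forall i j, e i * e j = (if i == j then e i else 0)),
      \sum_(i < N) e i = 1 &
      (forall x y, d (x + y) = d x + d y)] /\
  [/\
      (forall x y, d (x * y) = d x * y + x * d y),
      (forall x, d (d x) = 0)
    & (forall i x, d (e i * x) = e i * d x /\ d (x * e i) = d x * e i)].

(* A k-bimodule map A^{(x)_k n} -> B, for every n >= 1, is encoded (universal
   property of the tensor product over k) by a function on lists of length n
   which is additive (= F_2-linear) in each slot, k-balanced between adjacent
   slots, and k-linear on the outer left and right. *)
Definition kmaps (N : nat) (A B : pzRingType) (eA : 'I_N -> A) (eB : 'I_N -> B)
    (phi : seq A -> B) : Prop :=
  [/\ (forall l1 l2 x y,
         phi (l1 ++ (x + y) :: l2) = phi (l1 ++ x :: l2) + phi (l1 ++ y :: l2)),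
      (forall i l1 l2 x y,
         phi (l1 ++ (x * eA i) :: y :: l2) = phi (l1 ++ x :: (eA i * y) :: l2)),
      (forall i x l, phi ((eA i * x) :: l) = eB i * phi (x :: l))
    & (forall i x l, phi (rcons l (x * eA i)) = phi (rcons l x) * eB i)].

Definition dslot (A : pzRingType) (dA : A -> A) (l : seq A) (i : nat) : seq A :=
  set_nth 0 l i (dA (nth 0 l i)).

Definition mslot (A : pzRingType) (l : seq A) (i : nat) : seq A :=
  take i l ++ (nth 0 l i * nth 0 l i.+1) :: drop i.+2 l.

(* An A_infinity-homomorphism f : A -> B; f_n is f restricted to lists of
   length n (the value f [::] is irrelevant). *)
Definition is_Ainf_hom (N : nat) (A B : pzRingType) (eA : 'I_N -> A) (dA : A -> A)
    (eB : 'I_N -> B) (dB : B -> B) (f : seq A -> B) : Prop :=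
  kmaps eA eB f /\
  forall l : seq A, (0 < size l)%N ->
    dB (f l)
    + \sum_(i < size l) f (dslot dA l i)
    + \sum_(i < (size l).-1) f (mslot l i)
    + \sum_(j < (size l).-1) f (take j.+1 l) * f (drop j.+1 l) = 0.

(* The structure maps of the rank-one type DA bimodule ^B[f]_A, whose
   underlying k-bimodule is k:  delta_1 = 0 and delta_{1+n} = f_n (n >= 1),
   using k (x)_k A^{(x)n} = A^{(x)n} and B (x)_k k = B. *)
Definition rk1_delta (A B : pzRingType) (f : seq A -> B) (l : seq A) : B :=
  if l is [::] then 0 else f l.

(* A morphism between rank-one type DA structures (underlying k-bimodule k):
   phi_{1+n} : k (x) A^{(x)n} -> B (x) k = B, encoded as a function on lists of
   length n >= 0.  phi_1 : k -> B is a k-bimodule map, i.e. determined by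
   phi [::] = phi_1(1), which must commute with the idempotents. *)
Definition is_rk1_morphism (N : nat) (A B : pzRingType) (eA : 'I_N -> A)
    (eB : 'I_N -> B) (phi : seq A -> B) : Prop :=
  kmaps eA eB phi /\ forall i, eB i * phi [::] = phi [::] * eB i.

Definition rk1_mdiff (A B : pzRingType) (dA : A -> A) (dB : B -> B)
    (dX dY : seq A -> B) (phi : seq A -> B) (l : seq A) : B :=
  \sum_(j < (size l).+1) phi (take j l) * dY (drop j l)
  + \sum_(j < (size l).+1) dX (take j l) * phi (drop j l)
  + dB (phi l)
  + \sum_(i < size l) phi (dslot dA l i)
  + \sum_(i < (size l).-1) phi (mslot l i).

Definition rk1_comp (A B : pzRingType) (psi phi : seq A -> B) (l : seq A) : B :=
  \sum_(j < (size l).+1) phi (take j l) * psi (drop j l).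

Definition rk1_id (A B : pzRingType) (l : seq A) : B :=
  if l is [::] then 1 else 0.

Definition rk1_homotopy_equivalent (N : nat) (A B : pzRingType) (eA : 'I_N -> A)
    (dA : A -> A) (eB : 'I_N -> B) (dB : B -> B) (f g : seq A -> B) : Prop :=
  let dX := rk1_delta f in
  let dY := rk1_delta g in
  exists phi psi F G : seq A -> B,
    [/\ is_rk1_morphism eA eB phi, is_rk1_morphism eA eB psi,
        is_rk1_morphism eA eB F & is_rk1_morphism eA eB G] /\
    [/\
        (forall l, rk1_mdiff dA dB dX dY phi l = 0),
        (forall l, rk1_mdiff dA dB dY dX psi l = 0),
        (forall l, rk1_mdiff dA dB dX dX F l = rk1_comp psi phi l + rk1_id B l)
      & (forall l, rk1_mdiff dA dB dY dY G l = rk1_comp phi psi l + rk1_id B l)].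

Definition is_cycle (B : pzRingType) (dB : B -> B) (x : B) : Prop := dB x = 0.
Definition is_boundary (B : pzRingType) (dB : B -> B) (x : B) : Prop :=
  exists y, dB y = x.
Definition homologous (B : pzRingType) (dB : B -> B) (x y : B) : Prop :=
  is_boundary dB (x - y).

From mathcomp Require Import all_boot all_algebra.
Set Implicit Arguments. Unset Strict Implicit. Unset Printing Implicit Defensive.
Import GRing.Theory.
Local Open Scope ring_scope.

(* Only the two lowest components of the homotopy equivalence matter.  In arity
   zero, phi_1 and psi_1 are cycles and the homotopies F_1, G_1 bound
   phi_1 psi_1 + 1 and psi_1 phi_1 + 1, so u = phi_1 is a unit of H_*(B) with
   inverse v = psi_1.  In arity one, for a cycle a the equation (d phi)_2 = 0
   says that phi_2(a) bounds f_1(a) u + u g_1(a); hence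
   [f_1(a)] = [f_1(a)] u v = u [g_1(a)] v. *)

Lemma oppr_char2 (R : pzRingType) (x : R) : 1 + 1 = 0 :> R -> - x = x.
Proof.
move=> two0; apply/eqP; rewrite -subr_eq0 -opprD.
by rewrite -[x in x + x]mul1r -mulrDl two0 mul0r oppr0.
Qed.

Lemma morph_add0 (U V : zmodType) (h : U -> V) :
  {morph h : x y / x + y} -> h 0 = 0.
Proof.
move=> h_add; have := h_add 0 0; rewrite addr0 => /(congr1 (fun t => t - h 0)).
by rewrite subrr addrK.
Qed.

Section Homology.

Variables (R : pzRingType) (d : R -> R).
Hypothesis d_add : forall x y, d (x + y) = d x + d y.
Hypothesis d_leibniz : forall x y, d (x * y) = d x * y + x * d y.

Lemma diffN x : d (- x) = - d x.
Proof. by apply/eqP; rewrite -addr_eq0 -d_add addNr (morph_add0 d_add). Qed.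

Lemma homologous_sym x y : homologous d x y -> homologous d y x.
Proof. by case=> w dw; exists (- w); rewrite diffN dw opprB. Qed.

Lemma homologous_trans x y z :
  homologous d x y -> homologous d y z -> homologous d x z.
Proof. by case=> w dw [w' dw']; exists (w + w'); rewrite d_add dw dw' addrA subrK. Qed.

Lemma homologousMl z x y :
  is_cycle d z -> homologous d x y -> homologous d (z * x) (z * y).
Proof.
by move=> dz [w dw]; exists (z * w); rewrite d_leibniz dz mul0r add0r dw mulrBr.
Qed.

Lemma homologousMr z x y :
  is_cycle d z -> homologous d x y -> homologous d (x * z) (y * z).
Proof.
by move=> dz [w dw]; exists (w * z); rewrite d_leibniz dz mulr0 addr0 dw mulrBl.
Qed.

End Homology.

Lemma kmaps_zero1 (N : nat) (A B : pzRingType) (eA : 'I_N -> A) (eB : 'I_N -> B)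
    (phi : seq A -> B) :
  kmaps eA eB phi -> phi [:: 0] = 0.
Proof.
case=> phi_add _ _ _; apply: (morph_add0 (h := fun x => phi [:: x])) => x y.
exact: (phi_add [::] [::]).
Qed.

Lemma Ainf_hom_cycle (N : nat) (A B : pzRingType) (eA : 'I_N -> A) (dA : A -> A)
    (eB : 'I_N -> B) (dB : B -> B) (f : seq A -> B) (a : A) :
  is_Ainf_hom eA dA eB dB f -> is_cycle dA a -> is_cycle dB (f [:: a]).
Proof.
case=> kf hf da; have := hf [:: a] isT.
by rewrite /= !big_ord_recr !big_ord0 /dslot /= da (kmaps_zero1 kf) !addr0.
Qed.

Section RankOneMorphisms.

Variables (A B : pzRingType) (dA : A -> A) (dB : B -> B) (f g : seq A -> B).

Notation mdiff := (rk1_mdiff dA dB (rk1_delta f) (rk1_delta g)).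

Lemma rk1_mdiff_nil (phi : seq A -> B) : mdiff phi [::] = dB (phi [::]).
Proof. by rewrite /rk1_mdiff /= !big_ord_recr !big_ord0 /= mulr0 mul0r !add0r !addr0. Qed.

Lemma rk1_mdiff_cycle1 (N : nat) (eA : 'I_N -> A) (eB : 'I_N -> B)
    (phi : seq A -> B) (a : A) :
  kmaps eA eB phi -> is_cycle dA a ->
  mdiff phi [:: a] = phi [::] * g [:: a] + f [:: a] * phi [::] + dB (phi [:: a]).
Proof.
move=> kphi da; rewrite /rk1_mdiff /dslot /= !big_ord_recr !big_ord0 /= da.
by rewrite (kmaps_zero1 kphi) mulr0 mul0r ?add0r ?addr0.
Qed.

Hypothesis char2 : 1 + 1 = 0 :> B.

Lemma rk1_homotopy_unit (phi psi F : seq A -> B) :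
  mdiff F [::] = rk1_comp psi phi [::] + rk1_id B ([::] : seq A) ->
  homologous dB (phi [::] * psi [::]) 1.
Proof.
by rewrite rk1_mdiff_nil /rk1_comp big_ord1 => dF; exists (F [::]); rewrite dF oppr_char2.
Qed.

Lemma rk1_closed_morphism_intertwines (N : nat) (eA : 'I_N -> A) (eB : 'I_N -> B)
    (phi : seq A -> B) (a : A) :
  kmaps eA eB phi -> (forall l, mdiff phi l = 0) -> is_cycle dA a ->
  homologous dB (f [:: a] * phi [::]) (phi [::] * g [:: a]).
Proof.
move=> kphi dphi da; exists (phi [:: a]); apply/eqP.
rewrite oppr_char2 // addrC -[dB _]oppr_char2 // eq_sym -addr_eq0.
by rewrite -(rk1_mdiff_cycle1 kphi da) dphi.
Qed.

End RankOneMorphisms.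

Theorem lemma8p5 (N : nat) (A B : pzRingType)
    (eA : 'I_N -> A) (dA : A -> A) (eB : 'I_N -> B) (dB : B -> B)
    (f g : seq A -> B) :
  is_dga eA dA -> is_dga eB dB ->
  is_Ainf_hom eA dA eB dB f -> is_Ainf_hom eA dA eB dB g ->
  rk1_homotopy_equivalent eA dA eB dB f g ->
  exists u v : B,
    [/\ is_cycle dB u, is_cycle dB v,
        homologous dB (u * v) 1, homologous dB (v * u) 1
      & forall a : A, is_cycle dA a ->
          homologous dB (f [:: a]) (u * g [:: a] * v)].
Proof.
move=> _ [[char2 _ _ dB_add] [dB_leibniz _ _]] f_hom _.
move=> [phi [psi [F [G [[[kphi _] _ _ _] [dphi dpsi dF dG]]]]]].
have phi_cycle : is_cycle dB (phi [::]).
  by rewrite /is_cycle -(rk1_mdiff_nil dA dB f g) dphi.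
have psi_cycle : is_cycle dB (psi [::]).
  by rewrite /is_cycle -(rk1_mdiff_nil dA dB g f) dpsi.
have uv1 : homologous dB (phi [::] * psi [::]) 1.
  exact (rk1_homotopy_unit char2 (dF [::])).
have vu1 : homologous dB (psi [::] * phi [::]) 1.
  exact (rk1_homotopy_unit char2 (dG [::])).
exists (phi [::]), (psi [::]); split => // a da.
apply: (homologous_trans dB_add (y := f [:: a] * phi [::] * psi [::])).
- rewrite -mulrA -{1}[f [:: a]]mulr1; apply: (homologous_sym dB_add).
  exact (homologousMl dB_leibniz (Ainf_hom_cycle f_hom da) uv1).
- apply: (homologousMr dB_leibniz psi_cycle).
  exact (rk1_closed_morphism_intertwines char2 kphi dphi da).
Qed.
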